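(* Suppose Assumptions (A2) and (A3) below hold and $x$ is such that $\mathtt{P}_{N_p}^{\mathrm{G}}(x)$ has a feasible solution for the tubes $\mathsf{Z}_k^j=\{z\mid Tz\leq \tau_k^j\}$, $(j,k)\in I_{N_r:N_p-1}$. Then $\mathtt{P}_{N_p}^{\mathrm{G}}(x^+)$ is feasible for all $x^+\in \mathrm{conv}(\{A_i x+B_i u\})\oplus\mathsf W,\,\forall i\in\Gamma_p$, if the control input applied to the system follows the control policy $u=v+K_{\mathrm{inv}}(x-z)$.
   Context: Consider the uncertain linear system $x^+=Ax+Bu+w$ with $(A,B)\in\mathrm{conv}(\{(A_i,B_i),\,i\in\Gamma_p\})$, $\Gamma_p=\{1,\dots,n_p\}$, $w\in\mathsf W$ (convex polytope containing the origin in its interior), polytopic constraints $x\in\mathbb X$, $u\in\mathbb U$. The disturbance set is split as $\mathsf W\subseteq\overline{\mathsf W}\oplus\underline{\mathsf W}$ with $\overline{\mathsf W}=\mathrm{conv}\{w_l,\,l\in\Gamma_{\overline w}\}$ (large) and $\underline{\mathsf W}$ (small). Nominal model $z^+=A_iz+B_iv+w$, $w\in\overline{\mathsf W}$; control $u=v+K_{\mathrm{inv}}(x-z)$; $\mathsf S$ satisfies $(A_i+B_iK_{\mathrm{inv}})\mathsf S\oplus\underline{\mathsf W}\subseteq\mathsf S$; tightened sets $\mathbb Z=\mathbb X\ominus\mathsf S=\{z\mid Fz\le\mathbf 1\}$, $\mathbb V=\mathbb U\ominus K_{\mathrm{inv}}\mathsf S=\{v\mid Gv\le\mathbf 1\}$.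 The tube-enhanced multi-stage MPC problem uses a scenario tree with nodes $z_k^j$ and inputs $v_k^j$ ($I_{k_1:k_2}$ = tree indices at stages $k_1,\dots,k_2$), branching $z_{k+1}^c=A_iz_k^j+B_iv_k^j+w_l$ for all $i,l$ up to the robust horizon $N_r$ with $z_k^j\in\mathbb Z$, $v_k^j\in\mathbb V$, root constraint $x\in\{z_0^1\}\oplus\mathsf S$, and beyond $N_r$ tubes under the policy $v_k^j+K_{\mathrm{pred}}z$. $\mathtt{P}^{\mathrm G}_{N_p}(x)$ is its convex ''general complexity tube'' implementation: tubes $\mathsf Z_k^j=\{z\mid Tz\le\tau_k^j\}$ with fixed $T$ (such that $\{z\mid Tz\le\mathbf 1\}$ is $\lambda$-contractive) and decision variables $\tau_k^j$; the set inclusions are replaced via Farkas' lemma (for nonempty polytopes, $\{x\mid T_1x\le\tau_1\}\subseteq\{x\mid T_2x\le\tau_2\}$ iff there is a nonnegative $P$ with $PT_1=T_2$, $P\tau_1\le\tau_2$) using nonnegative matrices computed offline with $P_iT=T(A_i+B_iK_{\mathrm{pred}})$, $P_xT=F$, $P_uT=GK_{\mathrm{pred}}$, $P_QT=Q$, giving linear constraints $P_i\tau_k^j+TB_iv_k^j+Tw_l\le\tau_{k+1}^j$, $P_x\tau_k^j\le\mathbf 1$, $Gv_k^j+P_u\tau_k^j\le\mathbf 1$, terminal $P_i\tau_{N_p}^j+Tw_l\le\tau_{N_p}^j$, $Tz_{N_r}^j\le\tau_{N_r}^j$; the worst-case tube stage cost is upper bounded by slack variables $\gamma_k^j$ ($-\mu\le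 P_Q\tau_k^j-Qy_k^j\le\mu$ with $y_k^j\in\mathbb Z_f$, $-\eta\le Rv_k^j\le\eta$, $\mathbf 1^T\mu+\mathbf 1^T\eta\le\gamma_k^j$). (A2) $\mathsf S$ is a convex compact disturbance invariant polytope with $\mathsf S\subset\mathbb X$, $K_{\mathrm{inv}}\mathsf S\subset\mathbb U$ ($\mathsf S=\{0\}$ if $\underline{\mathsf W}=\{0\}$). (A3) $\mathbb Z_f\subseteq\mathbb X\ominus\mathsf S$ is a robust positively invariant polytope containing the origin for the nominal model with $K_f=K_{\mathrm{pred}}$, $K_f\mathbb Z_f\subseteq\mathbb U\ominus K_{\mathrm{inv}}\mathsf S$, and for all tubes $\mathsf Z\subseteq\mathbb Z_f$, $(A_i+B_iK_f)\mathsf Z\oplus\overline{\mathsf W}\subseteq\mathsf Z^+\subseteq\mathbb Z_f$ for all $i$. *)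

From mathcomp Require Import all_boot all_order all_algebra.
Set Implicit Arguments. Unset Strict Implicit. Unset Printing Implicit Defensive.
Import Order.TTheory GRing.Theory Num.Theory.
Local Open Scope ring_scope.

Definition vset (R : realFieldType) (n : nat) := 'cV[R]_n -> Prop.

Definition vle (R : realFieldType) (n : nat) (u v : 'cV[R]_n) : Prop :=
  forall i, u i ord0 <= v i ord0.

Definition ones (R : realFieldType) (n : nat) : 'cV[R]_n := const_mx 1.

Definition mxnonneg (R : realFieldType) (m n : nat) (M : 'M[R]_(m, n)) : Prop :=
  forall i j, 0 <= M i j.

Definition is_polytope (R : realFieldType) (n : nat) (P : vset R n) : Prop :=
  (exists (m : nat) (H : 'M[R]_(m, n)) (h : 'cV[R]_m),
      forall x, P x <-> vle (H *m x) h) /\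
  (exists M : R, forall x, P x -> forall i, `|x i ord0| <= M).

Definition zero_in_interior (R : realFieldType) (n : nat) (P : vset R n) : Prop :=
  exists eps : R, 0 < eps /\ forall x : 'cV[R]_n, (forall i, `|x i ord0| <= eps) -> P x.

Definition conv_pts (R : realFieldType) (n k : nat) (p : 'I_k -> 'cV[R]_n) : vset R n :=
  fun x => exists th : 'I_k -> R, (forall l, 0 <= th l) /\ \sum_l th l = 1 /\
                                   x = \sum_l th l *: p l.

Definition msum (R : realFieldType) (n : nat) (P Q : vset R n) : vset R n :=
  fun x => exists a b, P a /\ Q b /\ x = a + b.

Section TubeMPC.
Variables (R : realFieldType) (nx nu np nw nT nF nG nQ nRc : nat).
Variables (A : 'I_np -> 'M[R]_(nx, nx)) (B : 'I_np -> 'M[R]_(nx, nu)).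
Variables (wv : 'I_nw -> 'cV[R]_nx).      (* vertices w_l of \overline{W} *)
Variables (S : vset R nx) (Kinv Kpred : 'M[R]_(nu, nx)).
Variables (F : 'M[R]_(nF, nx)) (G : 'M[R]_(nG, nu)).
Variables (T : 'M[R]_(nT, nx)) (P : 'I_np -> 'M[R]_(nT, nT)).
Variables (Px : 'M[R]_(nF, nT)) (Pu : 'M[R]_(nG, nT)) (PQ : 'M[R]_(nQ, nT)).
Variables (Q : 'M[R]_(nQ, nx)) (Rc : 'M[R]_(nRc, nu)) (Zf : vset R nx).
Variables (Nr Np : nat).

(* a branch of the scenario tree: model index i and disturbance vertex l *)
Definition branch := ('I_np * 'I_nw)%type.

(* Tree nodes at stage k <= Nr are the paths
   p : seq branch of size k (root = [::], children of p are rcons p (i,l)).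
   For stages Nr <= k <= Np every leaf p (size p = Nr) carries a tube
   {z | T z <= tau p k} and nominal inputs vtb p k (policy vtb p k + Kpred z). *)
Definition PG_cons (x : 'cV[R]_nx)
    (zt : seq branch -> 'cV[R]_nx) (vt : seq branch -> 'cV[R]_nu)
    (tau : seq branch -> nat -> 'cV[R]_nT) (vtb : seq branch -> nat -> 'cV[R]_nu)
    (y : seq branch -> nat -> 'cV[R]_nx)
    (mu : seq branch -> nat -> 'cV[R]_nQ) (eta : seq branch -> nat -> 'cV[R]_nRc)
    (gam : seq branch -> nat -> R) : Prop :=
  S (x - zt [::]) /\
  (forall p : seq branch, (size p < Nr)%N ->
     vle (F *m zt p) (ones R nF) /\ vle (G *m vt p) (ones R nG) /\
     forall i l, zt (rcons p (i, l)) = A i *m zt p + B i *m vt p + wv l) /\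
  (forall p : seq branch, size p = Nr ->
     vle (T *m zt p) (tau p Nr) /\
     (forall k, (Nr <= k < Np)%N ->
        (forall i l, vle (P i *m tau p k + T *m (B i *m vtb p k) + T *m wv l)
                         (tau p k.+1)) /\
        vle (Px *m tau p k) (ones R nF) /\
        vle (G *m vtb p k + Pu *m tau p k) (ones R nG) /\
        (* slack upper bound of the worst-case tube stage cost *)
        Zf (y p k) /\
        vle (- mu p k) (PQ *m tau p k - Q *m y p k) /\
        vle (PQ *m tau p k - Q *m y p k) (mu p k) /\
        vle (- eta p k) (Rc *m vtb p k) /\ vle (Rc *m vtb p k) (eta p k) /\
        \sum_i mu p k i ord0 + \sum_i eta p k i ord0 <= gam p k) /\
     (* terminal tube: constraint satisfaction (nominal input 0) and invariance *)
     vle (Px *m tau p Np) (ones R nF) /\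
     vle (Pu *m tau p Np) (ones R nG) /\
     (forall i l, vle (P i *m tau p Np + T *m wv l) (tau p Np))).

Definition PG_feasible (x : 'cV[R]_nx) : Prop :=
  exists zt vt tau vtb y mu eta gam, PG_cons x zt vt tau vtb y mu eta gam.

End TubeMPC.

From mathcomp Require Import all_boot all_order all_algebra zify.
Set Implicit Arguments. Unset Strict Implicit. Unset Printing Implicit Defensive.
Import Order.TTheory GRing.Theory Num.Theory.
Local Open Scope ring_scope.

(* The realised model at x is a convex combination (theta_i) of the vertex
   models, and the disturbance splits as sum_l phi_l w_l + w with w in the
   small set.  Weighting the first branches (i, l) of the old scenario tree by
   c_(i,l) = theta_i phi_l and dropping the root gives a candidate at x+: every
   node of the new tree is the c-average of the old nodes one stage deeper, the
   old leaves are extended by one stage with the tube policy v + K_pred z, and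
   every tube is shifted by one stage, the terminal tube being repeated since it
   is invariant.  All constraints of P^G are linear inequalities whose Farkas
   matrices are nonnegative, so they survive averaging, and the root constraint
   x+ - z_0^+ in S is the invariance of S under the error dynamics
   A_i + B_i K_inv.  The cost slacks are rebuilt around y = 0, which lies in
   Z_f. *)

Lemma addrDKB (V : zmodType) (a b c d : V) : a + (b + d) - (c + b) = a - c + d.
Proof. by rewrite opprD addrACA [b + d]addrC addrK. Qed.

Lemma closed_loop_error (R : pzRingType) nx nu (A : 'M[R]_nx) (B : 'M[R]_(nx, nu))
    (K : 'M[R]_(nu, nx)) (x z : 'cV[R]_nx) (v : 'cV[R]_nu) :
  A *m x + B *m (v + K *m (x - z)) - (A *m z + B *m v) = (A + B *m K) *m (x - z).
Proof. by rewrite mulmxDr addrDKB mulmxDl -mulmxA [A *m (x - z)]mulmxBr. Qed.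

Section ComponentwiseOrder.
Variable R : realFieldType.

Lemma vlexx n (u : 'cV[R]_n) : vle u u.
Proof. by move=> i; apply: lexx. Qed.

Lemma vle_trans n (u v w : 'cV[R]_n) : vle u v -> vle v w -> vle u w.
Proof. by move=> huv hvw i; apply: le_trans (huv i) (hvw i). Qed.

Lemma vleD n (u1 v1 u2 v2 : 'cV[R]_n) :
  vle u1 v1 -> vle u2 v2 -> vle (u1 + u2) (v1 + v2).
Proof. by move=> h1 h2 i; rewrite !mxE lerD. Qed.

Lemma vle_mulmx m n (M : 'M[R]_(m, n)) u v :
  mxnonneg M -> vle u v -> vle (M *m u) (M *m v).
Proof.
move=> M_ge0 huv i; rewrite !mxE; apply: ler_sum => j _.
by apply: ler_wpM2l; [apply: M_ge0 | apply: huv].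
Qed.

Lemma vle_normN n (v : 'cV[R]_n) : vle (- map_mx Num.norm v) v.
Proof. by move=> i; rewrite !mxE lerNnormlW. Qed.

Lemma vle_norm n (v : 'cV[R]_n) : vle v (map_mx Num.norm v).
Proof. by move=> i; rewrite mxE ler_norm. Qed.

End ComponentwiseOrder.

Section ConvexCombination.
Variables (R : realFieldType) (I : finType) (c : I -> R).

Definition cmix m n (f : I -> 'M[R]_(m, n)) : 'M[R]_(m, n) := \sum_b c b *: f b.

Lemma eq_cmix m n (f g : I -> 'M[R]_(m, n)) : f =1 g -> cmix f = cmix g.
Proof. by move=> fg; apply: eq_bigr => b _; rewrite fg. Qed.

Lemma cmixD m n (f g : I -> 'M[R]_(m, n)) :
  cmix (fun b => f b + g b) = cmix f + cmix g.
Proof. by rewrite -big_split; apply: eq_bigr => b _; rewrite scalerDr. Qed.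

Lemma cmixB m n (f g : I -> 'M[R]_(m, n)) :
  cmix (fun b => f b - g b) = cmix f - cmix g.
Proof. by rewrite -sumrB; apply: eq_bigr => b _; rewrite scalerBr. Qed.

Lemma cmix_mulmx m n p (M : 'M[R]_(m, n)) (f : I -> 'M[R]_(n, p)) :
  M *m cmix f = cmix (fun b => M *m f b).
Proof. by rewrite mulmx_sumr; apply: eq_bigr => b _; rewrite scalemxAr. Qed.

Hypotheses (c_ge0 : forall b, 0 <= c b) (c_sum1 : \sum_b c b = 1).

Lemma cmix_const m n (a : 'M[R]_(m, n)) : cmix (fun=> a) = a.
Proof. by rewrite /cmix -scaler_suml c_sum1 scale1r. Qed.

Lemma vle_cmix n (f g : I -> 'cV[R]_n) :
  (forall b, vle (f b) (g b)) -> vle (cmix f) (cmix g).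
Proof.
move=> fg i; rewrite !summxE; apply: ler_sum => b _; rewrite !mxE.
by apply: ler_wpM2l; [apply: c_ge0 | apply: fg].
Qed.

Lemma cmix_vle n (f : I -> 'cV[R]_n) a : (forall b, vle (f b) a) -> vle (cmix f) a.
Proof. by move=> fa; rewrite -(cmix_const a); apply: vle_cmix. Qed.

Lemma polytope_cmix n (S : vset R n) (f : I -> 'cV[R]_n) :
  is_polytope S -> (forall b, S (f b)) -> S (cmix f).
Proof.
case=> [[m [H [h HS]]] _] Sf; apply/HS; rewrite cmix_mulmx.
by apply: cmix_vle => b; apply/HS.
Qed.

End ConvexCombination.

Section ProductWeights.
Variables (R : realFieldType) (I J : finType) (th : I -> R) (phi : J -> R).
Hypotheses (th_sum1 : \sum_i th i = 1) (phi_sum1 : \sum_j phi j = 1).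

Lemma sum_pair_weights : \sum_(b : I * J) th b.1 * phi b.2 = 1.
Proof.
rewrite -(pair_bigA _ (fun i j => th i * phi j)) /= -th_sum1.
by apply: eq_bigr => i _; rewrite -mulr_sumr phi_sum1 mulr1.
Qed.

Lemma cmix_pair n (g : I -> 'cV[R]_n) (h : J -> 'cV[R]_n) :
  cmix (fun b : I * J => th b.1 * phi b.2) (fun b => g b.1 + h b.2) =
  cmix th g + cmix phi h.
Proof.
rewrite /cmix -(pair_bigA _ (fun i j => (th i * phi j) *: (g i + h j))) /=.
rewrite -[\sum_j phi j *: h j]scale1r -th_sum1 scaler_suml -big_split /=.
apply: eq_bigr => i _; rewrite -[th i *: g i]scale1r -phi_sum1 scaler_suml.
rewrite scaler_sumr -big_split /=; apply: eq_bigr => j _.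
by rewrite scalerDr !scalerA mulrC.
Qed.

End ProductWeights.

Lemma cmix_successor_error (R : realFieldType) (I J : finType) nx nu
    (A : I -> 'M[R]_nx) (B : I -> 'M[R]_(nx, nu)) (wv : J -> 'cV[R]_nx)
    (S Wu : vset R nx) (Kinv : 'M[R]_(nu, nx)) (th : I -> R) (phi : J -> R)
    (x z : 'cV[R]_nx) (v : 'cV[R]_nu) (wu : 'cV[R]_nx) :
  is_polytope S -> (forall i s w, S s -> Wu w -> S ((A i + B i *m Kinv) *m s + w)) ->
  (forall i, 0 <= th i) -> \sum_i th i = 1 -> \sum_j phi j = 1 ->
  S (x - z) -> Wu wu ->
  S (cmix th (fun i => A i *m x + B i *m (v + Kinv *m (x - z))) + (cmix phi wv + wu)
     - cmix (fun b : I * J => th b.1 * phi b.2) (fun b => A b.1 *m z + B b.1 *m v + wv b.2)).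
Proof.
move=> S_poly S_inv th_ge0 th_sum1 phi_sum1 Sxz Wu_wu.
rewrite (cmix_pair th_sum1 phi_sum1 (fun i => A i *m z + B i *m v)) addrDKB.
rewrite -cmixB -(cmix_const th_sum1 wu) -cmixD.
apply: polytope_cmix => // i; rewrite closed_loop_error; exact: S_inv.
Qed.

Section ShiftedSolution.
Variables (R : realFieldType) (nx nu np nw nT nF nG nQ nRc : nat).
Variables (A : 'I_np -> 'M[R]_(nx, nx)) (B : 'I_np -> 'M[R]_(nx, nu)).
Variables (wv : 'I_nw -> 'cV[R]_nx) (S : vset R nx) (Kpred : 'M[R]_(nu, nx)).
Variables (F : 'M[R]_(nF, nx)) (G : 'M[R]_(nG, nu)).
Variables (T : 'M[R]_(nT, nx)) (P : 'I_np -> 'M[R]_(nT, nT)).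
Variables (Px : 'M[R]_(nF, nT)) (Pu : 'M[R]_(nG, nT)) (PQ : 'M[R]_(nQ, nT)).
Variables (Q : 'M[R]_(nQ, nx)) (Rc : 'M[R]_(nRc, nu)) (Zf : vset R nx).
Variables (Nr Np : nat).

Hypotheses (HP : forall i, P i *m T = T *m (A i + B i *m Kpred))
  (HPx : Px *m T = F) (HPu : Pu *m T = G *m Kpred).
Hypotheses (HPnn : forall i, mxnonneg (P i)) (HPxnn : mxnonneg Px)
  (HPunn : mxnonneg Pu).
Hypotheses (Zf0 : Zf 0) (Nr_gt0 : (0 < Nr)%N) (Nr_le_Np : (Nr <= Np)%N).

Definition tube_stage (t : 'cV[R]_nT) (v : 'cV[R]_nu) (t' : 'cV[R]_nT) : Prop :=
  (forall i l, vle (P i *m t + T *m (B i *m v) + T *m wv l) t') /\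
  vle (Px *m t) (ones R nF) /\ vle (G *m v + Pu *m t) (ones R nG).

(* At the terminal stage Np the input is 0 and the tube is its own successor,
   so the terminal constraints of P^G are the stage constraints at Np. *)
Definition tube_input (v : nat -> 'cV[R]_nu) k : 'cV[R]_nu :=
  if (k < Np)%N then v k else 0.

Definition tube_feasible (t : nat -> 'cV[R]_nT) (v : nat -> 'cV[R]_nu) : Prop :=
  forall k, (Nr <= k <= Np)%N -> tube_stage (t k) (tube_input v k) (t (minn k.+1 Np)).

Definition tube_shift (t : nat -> 'cV[R]_nT) k := t (minn k.+1 Np).

Definition input_shift (v : nat -> 'cV[R]_nu) k := tube_input v k.+1.

Lemma tube_stage_closed_loop z t v t' :
  vle (T *m z) t -> tube_stage t v t' ->
  (forall i l, vle (T *m (A i *m z + B i *m (v + Kpred *m z) + wv l)) t') /\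
  vle (F *m z) (ones R nF) /\ vle (G *m (v + Kpred *m z)) (ones R nG).
Proof.
move=> Tz [Hstep [Hx Hu]]; split; [|split].
- move=> i l; apply: vle_trans (Hstep i l).
  have -> : T *m (A i *m z + B i *m (v + Kpred *m z) + wv l) =
            P i *m (T *m z) + T *m (B i *m v) + T *m wv l.
    rewrite mulmxA HP -mulmxA mulmxDl !mulmxDr !mulmxA.
    by rewrite (addrC (T *m B i *m v)) addrA.
  by apply: vleD (vlexx _); apply: vleD (vlexx _); apply: vle_mulmx.
- by rewrite -HPx -mulmxA; apply: vle_trans Hx; apply: vle_mulmx.
- rewrite mulmxDr mulmxA -HPu -mulmxA; apply: vle_trans Hu.
  by apply: vleD (vlexx _) _; apply: vle_mulmx.
Qed.

Lemma tube_feasible_shift t v :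
  tube_feasible t v -> tube_feasible (tube_shift t) (input_shift v).
Proof.
move=> Ht k /andP[Nr_le_k k_le_Np]; rewrite /tube_shift /input_shift /tube_input.
have [k_lt_Np | Np_le_k] := ltnP k Np.
  rewrite (minn_idPl k_lt_Np); apply: Ht.
  by rewrite k_lt_Np andbT ltnW.
have -> : k = Np by apply/eqP; rewrite eqn_leq k_le_Np Np_le_k.
rewrite !(minn_idPr (leqnSn Np)).
by have := Ht Np; rewrite Nr_le_Np leqnn /tube_input ltnn (minn_idPr (leqnSn Np)); apply.
Qed.

Lemma tube_stage_cmix (I : finType) (c : I -> R) t v t' :
  (forall b, 0 <= c b) -> \sum_b c b = 1 ->
  (forall b, tube_stage (t b) (v b) (t' b)) ->
  tube_stage (cmix c t) (cmix c v) (cmix c t').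
Proof.
move=> c_ge0 c_sum1 Ht; split; [|split].
- move=> i l; have -> : P i *m cmix c t + T *m (B i *m cmix c v) + T *m wv l =
      cmix c (fun b => P i *m t b + T *m (B i *m v b) + T *m wv l).
    by rewrite !cmixD !cmix_mulmx cmix_const.
  by apply: vle_cmix => // b; apply: (Ht b).1.
- by rewrite cmix_mulmx; apply: cmix_vle => // b; apply: (Ht b).2.1.
- by rewrite !cmix_mulmx -cmixD; apply: cmix_vle => // b; apply: (Ht b).2.2.
Qed.

Lemma tube_feasible_cmix (I : finType) (c : I -> R) t v :
  (forall b, 0 <= c b) -> \sum_b c b = 1 ->
  (forall b, tube_feasible (t b) (v b)) ->
  tube_feasible (fun k => cmix c (fun b => t b k)) (fun k => cmix c (fun b => v b k)).
Proof.
move=> c_ge0 c_sum1 Ht k k_range.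
have -> : tube_input (fun k => cmix c (fun b => v b k)) k =
          cmix c (fun b => tube_input (v b) k).
  by rewrite /tube_input; case: ifP => // _; rewrite cmix_const.
by apply: tube_stage_cmix => // b; apply: Ht.
Qed.

Local Notation node := (seq (branch np nw)).

Variables (x : 'cV[R]_nx) (zt : node -> 'cV[R]_nx) (vt : node -> 'cV[R]_nu).
Variables (tau : node -> nat -> 'cV[R]_nT) (vtb : node -> nat -> 'cV[R]_nu).
Variables (y : node -> nat -> 'cV[R]_nx) (mu : node -> nat -> 'cV[R]_nQ).
Variables (eta : node -> nat -> 'cV[R]_nRc) (gam : node -> nat -> R).
Hypothesis Hsol : PG_cons A B wv S F G T P Px Pu PQ Q Rc Zf Nr Np
                          x zt vt tau vtb y mu eta gam.

Lemma leaf_tube q :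
  size q = Nr -> vle (T *m zt q) (tau q Nr) /\ tube_feasible (tau q) (vtb q).
Proof.
move=> hq; have [_ [_ /(_ q hq) [Tz [Hstage [Hx_end [Hu_end Hinv_end]]]]]] := Hsol.
split=> // k /andP[Nr_le_k k_le_Np]; rewrite /tube_input.
have [k_lt_Np | Np_le_k] := ltnP k Np.
  have [Hstep [Hx [Hu _]]] := Hstage k (introT andP (conj Nr_le_k k_lt_Np)).
  by rewrite (minn_idPl k_lt_Np).
have -> : k = Np by apply/eqP; rewrite eqn_leq k_le_Np Np_le_k.
rewrite (minn_idPr (leqnSn Np)); split; [|split] => //.
- by move=> i l; rewrite !mulmx0 addr0.
- by rewrite mulmx0 add0r.
Qed.

Definition vt_node (q : node) : 'cV[R]_nu :=
  if (size q < Nr)%N then vt q else tube_input (vtb q) Nr + Kpred *m zt q.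

Lemma leaf_closed_loop q : size q = Nr ->
  (forall i l, vle (T *m (A i *m zt q + B i *m vt_node q + wv l))
                   (tau q (minn Nr.+1 Np))) /\
  vle (F *m zt q) (ones R nF) /\ vle (G *m vt_node q) (ones R nG).
Proof.
move=> hq; have [Tz Htube] := leaf_tube hq.
rewrite /vt_node hq ltnn; apply: tube_stage_closed_loop Tz _.
by apply: Htube; rewrite leqnn Nr_le_Np.
Qed.

Lemma node_feasible q : (size q <= Nr)%N ->
  vle (F *m zt q) (ones R nF) /\ vle (G *m vt_node q) (ones R nG).
Proof.
rewrite leq_eqVlt => /orP[/eqP hq | hq]; first by have [] := leaf_closed_loop hq.
by have [_ [/(_ q hq) [Hx [Hu _]] _]] := Hsol; rewrite /vt_node hq.
Qed.

Variables (c : 'I_np * 'I_nw -> R).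
Hypotheses (c_ge0 : forall b, 0 <= c b) (c_sum1 : \sum_b c b = 1).

Definition zt_avg (p : node) := cmix c (fun b => zt (b :: p)).

Definition vt_shift (p : node) := cmix c (fun b => vt_node (b :: p)).

(* A new leaf p = rcons q (i, l) has q = take Nr.-1 p: its state is the
   successor of q along (i, l), and its tube averages the shifted tubes of the
   old leaves b :: q. *)
Definition zt_shift (p : node) : 'cV[R]_nx :=
  if (size p < Nr)%N then zt_avg p
  else if rev p is (i, l) :: _
       then A i *m zt_avg (take Nr.-1 p) + B i *m vt_shift (take Nr.-1 p) + wv l
       else 0.

Definition tau_shift (p : node) k :=
  cmix c (fun b => tube_shift (tau (b :: take Nr.-1 p)) k).

Definition vtb_shift (p : node) k :=
  cmix c (fun b => input_shift (vtb (b :: take Nr.-1 p)) k).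

Definition mu_shift (p : node) k := map_mx Num.norm (PQ *m tau_shift p k).

Definition eta_shift (p : node) k := map_mx Num.norm (Rc *m vtb_shift p k).

Definition gam_shift (p : node) k :=
  \sum_i mu_shift p k i ord0 + \sum_i eta_shift p k i ord0.

Lemma zt_shift_rcons p i l : (size p < Nr)%N ->
  zt_shift (rcons p (i, l)) = A i *m zt_shift p + B i *m vt_shift p + wv l.
Proof.
move=> hp; rewrite /zt_shift size_rcons hp.
have [hp1 | Nr_le_p1] := ltnP (size p).+1 Nr; last first.
  have hpNr : size p = Nr.-1 by lia.
  by rewrite rev_rcons -cats1 take_size_cat.
have [_ [Hrob _]] := Hsol.
rewrite /zt_avg /vt_shift !cmix_mulmx -(cmix_const c_sum1 (wv l)) -!cmixD.
apply: eq_cmix => b; have [_ [_ ->]] := Hrob (b :: p) hp1.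
by rewrite /vt_node hp1.
Qed.

Lemma shift_robust p : (size p < Nr)%N ->
  vle (F *m zt_shift p) (ones R nF) /\ vle (G *m vt_shift p) (ones R nG) /\
  forall i l, zt_shift (rcons p (i, l)) = A i *m zt_shift p + B i *m vt_shift p + wv l.
Proof.
move=> hp; split; [|split]; last by move=> i l; apply: zt_shift_rcons.
- rewrite /zt_shift hp /zt_avg cmix_mulmx; apply: cmix_vle => // b.
  by apply: (node_feasible _).1.
- rewrite /vt_shift cmix_mulmx; apply: cmix_vle => // b.
  by apply: (node_feasible _).2.
Qed.

Lemma shift_leaf_tube p i l : size p = Nr.-1 ->
  vle (T *m zt_shift (rcons p (i, l))) (tau_shift (rcons p (i, l)) Nr) /\
  tube_feasible (tau_shift (rcons p (i, l))) (vtb_shift (rcons p (i, l))).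
Proof.
move=> hp; have hq b : size (b :: p) = Nr by rewrite /= hp prednK.
have p_lt_Nr : (size p < Nr)%N by rewrite hp prednK.
rewrite /tau_shift /vtb_shift -cats1 take_size_cat // cats1; split.
  rewrite zt_shift_rcons // {1}/zt_shift p_lt_Nr /zt_avg /vt_shift !cmix_mulmx.
  rewrite -(cmix_const c_sum1 (wv l)) -!cmixD cmix_mulmx.
  by apply: vle_cmix => // b; apply: (leaf_closed_loop (hq b)).1.
apply: tube_feasible_cmix => // b; apply: tube_feasible_shift.
exact: (leaf_tube (hq b)).2.
Qed.

Lemma PG_feasible_shift x' :
  S (x' - cmix c (fun b => A b.1 *m zt [::] + B b.1 *m vt [::] + wv b.2)) ->
  PG_feasible A B wv S F G T P Px Pu PQ Q Rc Zf Nr Np x'.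
Proof.
move=> Hroot.
exists zt_shift, vt_shift, tau_shift, vtb_shift, (fun _ _ => 0), mu_shift, eta_shift,
  gam_shift.
have [_ [Hrob _]] := Hsol.
split; [|split; first exact: shift_robust].
  rewrite /zt_shift /= Nr_gt0; congr (S (_ - _)): Hroot.
  by apply: eq_cmix => -[i l]; have [_ [_ ->]] := Hrob [::] Nr_gt0.
case/lastP => [|p [i l]]; first by move=> /= Nr0; move: Nr_gt0; rewrite -Nr0.
rewrite size_rcons => hp; have [Tz Htube] := shift_leaf_tube i l (congr1 predn hp).
split=> //; split.
  move=> k /andP[Nr_le_k k_lt_Np].
  have := Htube k; rewrite Nr_le_k ltnW // /tube_input k_lt_Np (minn_idPl k_lt_Np).
  case=> // Hstep [Hx Hu]; rewrite mulmx0 subr0.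
  split=> //; split=> //; split=> //; split=> //.
  split; first exact: vle_normN; split; first exact: vle_norm.
  split; first exact: vle_normN; split; first exact: vle_norm.
  exact: lexx.
have := Htube Np; rewrite Nr_le_Np leqnn /tube_input ltnn (minn_idPr (leqnSn Np)).
case=> // Hstep [Hx Hu]; split=> //; split; first by rewrite mulmx0 add0r in Hu.
by move=> i' l'; have := Hstep i' l'; rewrite !mulmx0 addr0.
Qed.

End ShiftedSolution.

Theorem corollary1
  (R : realFieldType) (nx nu np nw nT nF nG nQ nRc : nat)
  (A : 'I_np -> 'M[R]_(nx, nx)) (B : 'I_np -> 'M[R]_(nx, nu))
  (X : vset R nx) (U : vset R nu)
  (W Wu : vset R nx) (wv : 'I_nw -> 'cV[R]_nx)
  (S : vset R nx) (Kinv Kpred : 'M[R]_(nu, nx))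
  (F : 'M[R]_(nF, nx)) (G : 'M[R]_(nG, nu))
  (T : 'M[R]_(nT, nx)) (lam : R) (P : 'I_np -> 'M[R]_(nT, nT))
  (Px : 'M[R]_(nF, nT)) (Pu : 'M[R]_(nG, nT)) (PQ : 'M[R]_(nQ, nT))
  (Q : 'M[R]_(nQ, nx)) (Rc : 'M[R]_(nRc, nu)) (Zf : vset R nx)
  (Nr Np : nat)
  (* standing setting *)
  (HX : is_polytope X) (HU : is_polytope U)
  (HW : is_polytope W) (HW0 : zero_in_interior W)
  (HWsplit : forall w, W w -> msum (conv_pts wv) Wu w)
  (HSinv : forall i s wu, S s -> Wu wu -> S ((A i + B i *m Kinv) *m s + wu))
  (HZ : forall z, vle (F *m z) (ones R nF) <-> (forall s, S s -> X (z + s)))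
  (HV : forall v, vle (G *m v) (ones R nG) <-> (forall s, S s -> U (v + Kinv *m s)))
  (Hlam : 0 <= lam < 1)
  (HTcontr : forall i z, vle (T *m z) (ones R nT) ->
                vle (T *m ((A i + B i *m Kpred) *m z)) (lam *: ones R nT))
  (HPnn : forall i, mxnonneg (P i)) (HPxnn : mxnonneg Px)
  (HPunn : mxnonneg Pu) (HPQnn : mxnonneg PQ)
  (HP : forall i, P i *m T = T *m (A i + B i *m Kpred))
  (HPx : Px *m T = F) (HPu : Pu *m T = G *m Kpred) (HPQ : PQ *m T = Q)
  (HNr : (1 <= Nr <= Np)%N)
  (* Assumption (A2) *)
  (HA2poly : is_polytope S)
  (HA2X : forall s, S s -> X s)
  (HA2U : forall s, S s -> U (Kinv *m s))
  (HA2zero : (forall w, Wu w <-> w = 0) -> forall s, S s <-> s = 0)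
  (* Assumption (A3), with K_f = Kpred *)
  (HA3poly : is_polytope Zf) (HA3zero : Zf 0)
  (HA3X : forall z, Zf z -> forall s, S s -> X (z + s))
  (HA3U : forall z, Zf z -> forall s, S s -> U (Kpred *m z + Kinv *m s))
  (HA3rpi : forall i z w, Zf z -> conv_pts wv w ->
               Zf ((A i + B i *m Kpred) *m z + w))
  (HA3tube : forall tau : 'cV[R]_nT, (forall z, vle (T *m z) tau -> Zf z) ->
     exists taup : 'cV[R]_nT,
       (forall i z w, vle (T *m z) tau -> conv_pts wv w ->
          vle (T *m ((A i + B i *m Kpred) *m z + w)) taup) /\
       (forall z, vle (T *m z) taup -> Zf z)) :
  forall (x : 'cV[R]_nx) zt vt tau vtb y mu eta gam,
    PG_cons A B wv S F G T P Px Pu PQ Q Rc Zf Nr Np x zt vt tau vtb y mu eta gam ->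
    let u := vt [::] + Kinv *m (x - zt [::]) in
    forall xp : 'cV[R]_nx,
      msum (conv_pts (fun i => A i *m x + B i *m u)) W xp ->
      PG_feasible A B wv S F G T P Px Pu PQ Q Rc Zf Nr Np xp.
Proof.
move=> x zt vt tau vtb y mu eta gam Hsol u xp.
case=> _ [w [[th [th_ge0 [th_sum1 ->]]] [/HWsplit Hw ->]]].
have [_ [wu [[phi [phi_ge0 [phi_sum1 ->]]] [Hwu ->]]]] := Hw.
have /andP[Nr_gt0 Nr_le_Np] := HNr.
have c_ge0 (b : 'I_np * 'I_nw) : 0 <= th b.1 * phi b.2 by rewrite mulr_ge0.
apply: (PG_feasible_shift HP HPx HPu HPnn HPxnn HPunn HA3zero Nr_gt0 Nr_le_Np Hsol
          c_ge0 (sum_pair_weights th_sum1 phi_sum1)).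
have [Hroot _] := Hsol.
by have := cmix_successor_error wv (vt [::]) HA2poly HSinv th_ge0 th_sum1 phi_sum1 Hroot Hwu.
Qed.
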